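(* If $f,g\in\mathbb{F}_q[x_1,\dots,x_n]$ are $*$-equivalent polynomials, then $N^*(f)=N^*(g)$.
   Context: $\mathbb{F}_q$ is a finite field with $q$ elements. For $D=(d_1,\dots,d_n)\in\mathbb{Z}_{\ge0}^n$ write $X^D=x_1^{d_1}\cdots x_n^{d_n}$. For a polynomial $f=\sum_{j=1}^k a_jX^{D_j}$ with all $a_j\in\mathbb{F}_q^*$ (a constant term corresponds to $D_j=0$), its augmented degree matrix $\tilde D_f$ is the $(n+1)\times k$ integer matrix whose $j$-th column is $(1,D_j)^T$. Two polynomials $f=\sum_{j=1}^k a_jX^{D_j}$ and $g=\sum_{j=1}^k a_jX^{D'_j}$ in $\mathbb{F}_q[x_1,\dots,x_n]$ are called $*$-equivalent if they have the same coefficient vector $(a_1,\dots,a_k)$ and the congruences $\tilde D_f v^T\equiv0\pmod{q-1}$ and $\tilde D_g v^T\equiv0\pmod{q-1}$ (in unknowns $v=(v_1,\dots,v_k)$ with $0\le v_j\le q-2$) have the same set of solutions. $N^*(f)$ denotes the number of roots of $f$ in $(\mathbb{F}_q^* )^n$. *)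

From mathcomp Require Import all_boot all_order all_algebra all_field.
Set Implicit Arguments. Unset Strict Implicit. Unset Printing Implicit Defensive.
Import GRing.Theory.
Local Open Scope ring_scope.

(* A polynomial f = \sum_{j<k} a_j X^{D_j} in F[x_1..x_n] is represented by its
   coefficient vector a : 'I_k -> F and its exponent vectors D : 'I_k -> 'I_n -> nat
   (D j i = exponent of x_i in the j-th monomial). *)

Definition sparse_eval (F : fieldType) (n k : nat) (a : 'I_k -> F)
  (D : 'I_k -> 'I_n -> nat) (x : 'I_n -> F) : F :=
  \sum_(j < k) a j * \prod_(i < n) x i ^+ D j i.

Definition Nstar (F : finFieldType) (n k : nat) (a : 'I_k -> F)
  (D : 'I_k -> 'I_n -> nat) : nat :=
  #|[set x : {ffun 'I_n -> F} | [forall i, x i != 0] && (sparse_eval a D x == 0)]|.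

(* augmented degree matrix: (n+1) x k, j-th column (1, D_j)^T *)
Definition aug_deg (n k : nat) (D : 'I_k -> 'I_n -> nat) (r : 'I_n.+1) (j : 'I_k) : nat :=
  match unlift ord0 r with
  | None => 1%N
  | Some i => D j i
  end.

Definition aug_solutions (q n k : nat) (D : 'I_k -> 'I_n -> nat) :
  {set {ffun 'I_k -> 'I_q.-1}} :=
  [set v : {ffun 'I_k -> 'I_q.-1} |
     [forall r : 'I_n.+1, (\sum_(j < k) aug_deg D r j * v j == 0 %[mod q.-1])%N]].

(* *-equivalence of f = sum a_j X^{D_j} and g = sum a_j X^{D'_j} (same coefficient
   vector a, which is part of the data), with q = #|F| *)
Definition star_equiv (F : finFieldType) (n k : nat) (a : 'I_k -> F)
  (D D' : 'I_k -> 'I_n -> nat) : Prop :=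
  aug_solutions #|F| D = aug_solutions #|F| D'.

Definition distinct_exps (n k : nat) (D : 'I_k -> 'I_n -> nat) : Prop :=
  forall j1 j2 : 'I_k, (forall i, D j1 i = D j2 i) -> j1 = j2.

(* Write the torus points as (y, x) in (F^* )^(1+n) and consider the monomial
   homomorphism phi_D (y, x) = (y x^D_j)_j into (F^* )^k.  Its fibres over its
   image are cosets of its kernel, so counting the zeros of y f(x) gives
     (q-1) N*(f) |im phi_D| = (q-1)^(n+1) #{h in im phi_D | sum_j a_j h_j = 0},
   and N*(f) depends only on the subgroup im phi_D.  With F^* = <z>, this image
   is {z^(c D~)}, i.e. it is determined by the row space of the augmented degree
   matrix D~ modulo q - 1.  By the Smith normal form, a vector lies in that row
   space iff it is orthogonal modulo q - 1 to every solution of D~ v = 0, so the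
   image is determined by the solution set, which *-equivalence preserves. *)

From mathcomp Require Import all_boot all_order all_algebra all_field.
From mathcomp Require Import ring.
From mathcomp Require cyclic.
Set Implicit Arguments. Unset Strict Implicit. Unset Printing Implicit Defensive.
Import GRing.Theory.
Local Open Scope ring_scope.

Definition dvdmx (m : int) (p q : nat) (A : 'M[int]_(p, q)) : Prop :=
  forall i j, (m %| A i j)%Z.
Arguments dvdmx m {p q} A.

Lemma dvdmx_mull (m : int) (p q r : nat) (A : 'M_(p, q)) (B : 'M_(q, r)) :
  dvdmx m B -> dvdmx m (A *m B).
Proof.
by move=> mB i j; rewrite mxE; apply: rpred_sum => l _; apply: dvdz_mull.
Qed.

Lemma dvdmx_mulr (m : int) (p q r : nat) (A : 'M_(p, q)) (B : 'M_(q, r)) :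
  dvdmx m A -> dvdmx m (A *m B).
Proof.
by move=> mA i j; rewrite mxE; apply: rpred_sum => l _; apply: dvdz_mulr.
Qed.

Definition rect_diag_mx (p k : nat) (d : seq int) : 'M[int]_(p, k) :=
  \matrix_(i, j) (d`_i *+ (i == j :> nat)).

Section ModularDuality.

Variable m : int.
Hypothesis m_neq0 : m != 0.

(* Testing with w = m / gcd(d, m) shows that gcd(d, m) divides s; Bezout then
   makes s a multiple of d modulo m. *)
Lemma modz_multiple_of_ann (d s : int) :
  (forall w, (m %| d * w)%Z -> (m %| s * w)%Z) -> exists y, (m %| s - y * d)%Z.
Proof.
move=> ann; pose g := gcdz d m.
have g_dvd_s : (g %| s)%Z.
  have mE : (m %/ g)%Z * g = m by rewrite divzK ?dvdz_gcdr.
  have mg_neq0 : (m %/ g)%Z != 0.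
    by apply: contra m_neq0 => /eqP mg0; rewrite -mE mg0 mul0r.
  rewrite -(dvdz_mul2r mg_neq0) [g * _]mulrC mE; apply: ann.
  by rewrite mulz_divA ?dvdz_gcdr // -divz_mulAC ?dvdz_gcdl // dvdz_mull.
have [u [v uv]] := Bezoutz d m.
exists ((s %/ g)%Z * u).
have -> : s - (s %/ g)%Z * u * d = (s %/ g)%Z * v * m.
  by rewrite -{1}(divzK g_dvd_s) /g -uv; ring.
exact: dvdz_mull.
Qed.

(* Columns j >= p of [rect_diag_mx p k d] vanish, whence the truncated
   diagonal entry [diag j]. *)
Lemma modz_rowspace_of_kernel_diag (p k : nat) (d : seq int) (s : 'rV[int]_k) :
  (forall w : 'cV_k, dvdmx m (rect_diag_mx p k d *m w) -> dvdmx m (s *m w)) ->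
  exists e : 'rV_p, dvdmx m (s - e *m rect_diag_mx p k d).
Proof.
set Dl := rect_diag_mx p k d => ann; pose diag (j : 'I_k) := d`_j *+ (j < p)%N.
have DlE r j : Dl r j = diag j *+ (r == j :> nat).
  rewrite mxE /diag; case: eqP => [<-|_]; last by rewrite !mulr0n.
  by rewrite ltn_ord.
have /fin_all_exists [y Hy] : forall j, exists y, (m %| s ord0 j - y * diag j)%Z.
  move=> j; apply: modz_multiple_of_ann => w mw.
  suff /(_ ord0 ord0) : dvdmx m (s *m (w *: delta_mx j (ord0 : 'I_1))).
    by rewrite -scalemxAr -colE !mxE mulrC.
  apply: ann => r c; rewrite -scalemxAr -colE ord1 2!mxE DlE.
  by case: (r == j :> nat); rewrite ?mulr0n ?mulr0 ?dvdz0 // mulr1n mulrC.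
pose e : 'rV_p := \row_r \sum_(j < k | j == r :> nat) y j.
have eDl j : (e *m Dl) ord0 j = y j * diag j.
  rewrite mxE; case: (ltnP j p) => [jp | pj].
    rewrite (bigD1 (Ordinal jp)) //= big1 ?addr0 => [|r rj].
      by rewrite DlE eqxx mulr1n mxE (big_pred1 j).
    by rewrite DlE (negbTE rj : (r == j :> nat) = false) mulr0n mulr0.
  rewrite /diag ltnNge pj mulr0n mulr0 big1 // => r _.
  by rewrite DlE (ltn_eqF (leq_trans (ltn_ord r) pj)) mulr0n mulr0.
exists e => i j; rewrite ord1.
have -> : (s - e *m Dl) ord0 j = s ord0 j - (e *m Dl) ord0 j by rewrite !mxE.
by rewrite eDl.
Qed.

Lemma modz_rowspace_of_kernel (p k : nat) (M : 'M[int]_(p, k)) (t : 'rV[int]_k) :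
  (forall v : 'cV_k, dvdmx m (M *m v) -> dvdmx m (t *m v)) ->
  exists c : 'rV_p, dvdmx m (t - c *m M).
Proof.
move=> ann; have [L uL [R uR [d _ defM]]] := int_Smith_normal_form M.
rewrite -/(rect_diag_mx p k d) in defM.
have [e He] : exists e, dvdmx m (t *m invmx R - e *m rect_diag_mx p k d).
  apply: modz_rowspace_of_kernel_diag => w Dw.
  have MRw : M *m (invmx R *m w) = L *m (rect_diag_mx p k d *m w).
    by rewrite defM !mulmxA mulmxK.
  by rewrite -mulmxA; apply: ann; rewrite MRw; apply: dvdmx_mull.
exists (e *m invmx L).
have -> : t - e *m invmx L *m M = (t *m invmx R - e *m rect_diag_mx p k d) *m R.
  by rewrite defM !mulmxA mulmxKV // mulmxBl mulmxKV.
exact: dvdmx_mulr.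
Qed.

End ModularDuality.

Lemma dvdz_sum_natmul_sub {I : finType} {m : int} (f : I -> nat) {x : I -> int}
    {xn : I -> nat} :
  (forall i, (m %| x i - (xn i)%:Z)%Z) ->
  (m %| \sum_i (f i)%:Z * x i - (\sum_i f i * xn i)%N%:Z)%Z.
Proof.
move=> x_xn; rewrite -[Posz (\sum_i _)%N]natz natr_sum -sumrB.
by apply: rpred_sum => i _; rewrite natrM !natz -mulrBr dvdz_mull.
Qed.

Lemma modn_rowspace_of_kernel (m p k : nat) (A : 'I_p -> 'I_k -> nat)
    (t : 'I_k -> nat) : (0 < m)%N ->
  (forall v : {ffun 'I_k -> 'I_m},
     (forall r, \sum_j A r j * v j == 0 %[mod m]) ->
     \sum_j t j * v j == 0 %[mod m])%N ->
  exists c : 'I_p -> nat, forall j, (t j = \sum_r A r j * c r %[mod m])%N.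
Proof.
move=> m_gt0 ann; have m_neq0 : m%:Z != 0 by rewrite eqz_nat -lt0n.
pose red x := `|(x %% m%:Z)%Z|%N.
have red_lt x : (red x < m)%N by rewrite -ltz_nat gez0_abs ?modz_ge0 ?ltz_pmod.
have red_mod x : (m%:Z %| x - (red x)%:Z)%Z.
  by rewrite gez0_abs ?modz_ge0 // -eqz_mod_dvd modz_mod.
have [c tcM] : exists c : 'rV_p,
    dvdmx m%:Z (\row_j (t j)%:Z - c *m \matrix_(r, j) (A r j)%:Z).
  apply: modz_rowspace_of_kernel => // v Mv i0 i1; rewrite !ord1.
  pose vn : {ffun 'I_k -> 'I_m} := [ffun j => Ordinal (red_lt (v j ord0))].
  have v_vn j : (m%:Z %| v j ord0 - (vn j : nat)%:Z)%Z by rewrite ffunE red_mod.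
  have tvn : (m%:Z %| (\sum_j t j * vn j)%N%:Z)%Z.
    have := ann vn; rewrite mod0n; apply=> r.
    have := Mv r ord0; rewrite mxE (eq_bigr (fun j => (A r j)%:Z * v j ord0)).
      by move/rpredB/(_ (dvdz_sum_natmul_sub (A r) v_vn)); rewrite subKr.
    by move=> j _; rewrite mxE.
  rewrite mxE (eq_bigr (fun j => (t j)%:Z * v j ord0)) => [|j _]; last first.
    by rewrite mxE.
  by have := rpredD (dvdz_sum_natmul_sub t v_vn) tvn; rewrite subrK.
exists (fun r => red (c ord0 r)) => j.
apply/eqP; rewrite -eqz_nat -!modz_nat eqz_mod_dvd.
have := rpredD (tcM ord0 j)
  (dvdz_sum_natmul_sub (A^~ j) (fun r => red_mod (c ord0 r))).
rewrite !mxE (eq_bigr (fun r => (A r j)%:Z * c ord0 r)) ?subrKA // => r _.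
by rewrite mxE mulrC.
Qed.

Lemma card_preim_uniform_fibers (T U : finType) (P : {set T}) (f : T -> U)
    (Q : pred U) (K : nat) :
  (forall h, h \in f @: P -> #|[set x in P | f x == h]| = K) ->
  #|[set x in P | Q (f x)]| = (#|[set h in f @: P | Q h]| * K)%N.
Proof.
move=> fibK; rewrite -sum_nat_const -!sum1_card.
rewrite (partition_big f (mem [set h in f @: P | Q h])) /=; last first.
  by move=> x; rewrite !inE => /andP[Px Qfx]; rewrite imset_f.
apply: eq_bigr => h; rewrite inE => /andP[Ph Qh].
rewrite -(fibK h Ph) -sum1_card; apply: eq_bigl => x; rewrite !inE.
by apply/andP/andP => [[/andP[-> _] ->] | [-> /eqP fxh]]; rewrite // fxh Qh.
Qed.

Section Torus.

Variables (F : finFieldType) (n k : nat).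

Definition torus : {set F * {ffun 'I_n -> F}} :=
  [set u : F * {ffun 'I_n -> F} | (u.1 != 0) && [forall i, u.2 i != 0]].

(* The coordinate [u.1] accounts for the row (1, ..., 1) of the augmented
   degree matrix. *)
Definition monomial_map (D : 'I_k -> 'I_n -> nat) (u : F * {ffun 'I_n -> F}) :
  {ffun 'I_k -> F} := [ffun j => u.1 * \prod_i u.2 i ^+ D j i].

Definition vanishes (a : 'I_k -> F) (h : {ffun 'I_k -> F}) : bool :=
  \sum_j a j * h j == 0.

Definition torus_mul (u v : F * {ffun 'I_n -> F}) : F * {ffun 'I_n -> F} :=
  (u.1 * v.1, [ffun i => u.2 i * v.2 i]).

Lemma torus_mulI u : u \in torus -> injective (torus_mul u).
Proof.
rewrite inE => /andP[u1 /forallP u2] [y x] [y' x'] [/(mulfI u1) -> /ffunP xx'].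
by congr pair; apply/ffunP => i; have := xx' i; rewrite !ffunE => /(mulfI (u2 i)).
Qed.

Lemma torus_mulT u v : u \in torus -> (torus_mul u v \in torus) = (v \in torus).
Proof.
rewrite !inE => /andP[u1 /forallP u2] /=; rewrite mulf_eq0 negb_or u1.
by congr (_ && _); apply: eq_forallb => i; rewrite ffunE mulf_eq0 negb_or u2.
Qed.

Lemma monomial_mapM D u v :
  monomial_map D (torus_mul u v) =
  [ffun j => monomial_map D u j * monomial_map D v j].
Proof.
apply/ffunP => j; rewrite !ffunE /=.
under eq_bigr do rewrite ffunE exprMn.
by rewrite big_split /= mulrACA.
Qed.

Lemma monomial_map_neq0 D u j : u \in torus -> monomial_map D u j != 0.
Proof.
rewrite inE => /andP[u1 /forallP u2]; rewrite ffunE mulf_neq0 //.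
by apply/prodf_neq0 => i _; apply: expf_neq0.
Qed.

Lemma card_monomial_fiber D h : h \in monomial_map D @: torus ->
  #|[set u in torus | monomial_map D u == h]| =
  #|[set u in torus | monomial_map D u == [ffun=> 1]]|.
Proof.
case/imsetP => u0 u0T ->; rewrite -(card_preimset _ (torus_mulI u0T)).
apply: eq_card => u; rewrite inE [_ \in [set _ in _ | _]]inE [RHS]inE.
rewrite torus_mulT //; congr (_ && _).
rewrite monomial_mapM; apply/eqP/eqP => [/ffunP hu | ->]; apply/ffunP => j.
  move: (hu j); rewrite ffunE => hu_j; rewrite [RHS]ffunE.
  by apply: (mulfI (monomial_map_neq0 D j u0T)); rewrite hu_j mulr1.
by rewrite !ffunE mulr1.
Qed.

Lemma card_torus_vanishing a D :
  #|[set u in torus | vanishes a (monomial_map D u)]| = (#|F|.-1 * Nstar a D)%N.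
Proof.
have -> : [set u in torus | vanishes a (monomial_map D u)] =
    setX [set~ 0]
      [set x : {ffun 'I_n -> F} | [forall i, x i != 0] && (sparse_eval a D x == 0)].
  apply/setP => -[y x]; rewrite !inE /vanishes /sparse_eval /=.
  under eq_bigr do rewrite ffunE /= mulrCA.
  by rewrite -mulr_sumr mulf_eq0; case: (y =P 0).
by rewrite cardsX cardsC1.
Qed.

Lemma Nstar_card_image a D :
  (#|F|.-1 * Nstar a D * #|monomial_map D @: torus|)%N =
  (#|[set h in monomial_map D @: torus | vanishes a h]| * #|torus|)%N.
Proof.
pose K := #|[set u in torus | monomial_map D u == [ffun=> 1]]|.
have countQ Q : #|[set u in torus | Q (monomial_map D u)]| =
    (#|[set h in monomial_map D @: torus | Q h]| * K)%N.
  exact: card_preim_uniform_fibers (@card_monomial_fiber D).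
have cardT : #|torus| = (#|monomial_map D @: torus| * K)%N.
  by have := countQ predT; rewrite !setIdE !setIT.
by rewrite -card_torus_vanishing countQ cardT mulnAC mulnA.
Qed.

End Torus.

Section FinFieldUnits.

Variable F : finFieldType.

Lemma card_finField_pred_gt0 : (0 < #|F|.-1)%N.
Proof. by rewrite ltn_predRL card_finNzRing_gt1. Qed.

Lemma expf_card_pred (u : F) : u != 0 -> u ^+ #|F|.-1 = 1.
Proof.
move=> u_neq0; apply: (mulfI u_neq0); rewrite mulr1 -exprS prednK ?expf_card //.
exact: ltnW (card_finNzRing_gt1 F).
Qed.

Lemma finField_prim_root : exists z : F, (#|F|.-1).-primitive_root z.
Proof.
have /hasP[z _ zP] : has (#|F|.-1).-primitive_root (enum [set~ (0 : F)]).
  apply: cyclic.has_prim_root; rewrite ?enum_uniq ?card_finField_pred_gt0 //.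
    by apply/allP => u; rewrite mem_enum !inE unity_rootE => /expf_card_pred ->.
  by rewrite -cardE cardsC1.
by exists z.
Qed.

End FinFieldUnits.

Section MonomialImage.

Variables (F : finFieldType) (n k : nat).

Lemma monomial_map_powers (z : F) (D : 'I_k -> 'I_n -> nat) (c : 'I_n.+1 -> nat) :
  monomial_map D (z ^+ c ord0, [ffun i => z ^+ c (lift ord0 i)]) =
  [ffun j => z ^+ (\sum_r aug_deg D r j * c r)].
Proof.
apply/ffunP => j; rewrite !ffunE big_ord_recl /= /aug_deg unlift_none mul1n exprD.
congr (_ * _); rewrite expr_sum; apply: eq_bigr => i _.
by rewrite ffunE liftK -exprM mulnC.
Qed.

Lemma monomial_image_sub (D D' : 'I_k -> 'I_n -> nat) :
  aug_solutions #|F| D' \subset aug_solutions #|F| D ->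
  monomial_map D @: torus F n \subset monomial_map D' @: torus F n.
Proof.
move=> solD'D; apply/subsetP => _ /imsetP[[y x] + ->].
rewrite inE /= => /andP[y_neq0 /forallP x_neq0].
have [z zP] := finField_prim_root F.
have z_neq0 : z != 0 by rewrite (prim_root_eq0 zP) -lt0n card_finField_pred_gt0.
have zlog u : u != 0 -> exists e : nat, u = z ^+ e.
  by move=> /expf_card_pred/(prim_rootP zP)[e ->]; exists e.
have [ey ->] := zlog y y_neq0.
have /fin_all_exists[ex ex_def] := fun i => zlog (x i) (x_neq0 i).
pose c r := if unlift ord0 r is Some i then ex i else ey.
have -> : (z ^+ ey, x) = (z ^+ c ord0, [ffun i => z ^+ c (lift ord0 i)]).
  congr pair; first by rewrite /c unlift_none.
  by apply/ffunP => i; rewrite ffunE /c liftK -ex_def.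
rewrite monomial_map_powers.
have [v v_solD' | c' cc'] :=
  modn_rowspace_of_kernel (A := aug_deg D')
    (t := fun j => \sum_r aug_deg D r j * c r)%N (card_finField_pred_gt0 F).
  have : v \in aug_solutions #|F| D.
    by apply: (subsetP solD'D); rewrite inE; apply/forallP.
  rewrite inE => /forallP v_solD; rewrite mod0n.
  have -> : (\sum_j (\sum_r aug_deg D r j * c r) * v j =
      \sum_r c r * \sum_j aug_deg D r j * v j)%N.
    rewrite (eq_bigr _ (fun j _ => big_distrl _ _ _)) exchange_big /=.
    apply: eq_bigr => r _; rewrite big_distrr.
    by apply: eq_bigr => j _; rewrite mulnAC mulnC.
  by apply: dvdn_sum => r _; apply: dvdn_mull; have := v_solD r; rewrite mod0n.
apply/imsetP; exists (z ^+ c' ord0, [ffun i => z ^+ c' (lift ord0 i)]).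
  by rewrite inE /= expf_neq0 //=; apply/forallP => i; rewrite ffunE expf_neq0.
rewrite monomial_map_powers; apply/ffunP => j; rewrite !ffunE.
by apply/eqP; rewrite (eq_prim_root_expr zP); apply/eqP/cc'.
Qed.

End MonomialImage.

Theorem mainTheorem6 (F : finFieldType) (n k : nat) (a : 'I_k -> F)
  (D D' : 'I_k -> 'I_n -> nat) :
  (forall j, a j != 0) ->
  distinct_exps D -> distinct_exps D' ->
  star_equiv a D D' ->
  Nstar a D = Nstar a D'.
Proof.
(* Neither nonzero coefficients nor distinct monomials are needed. *)
move=> _ _ _ eqD.
have im_eq : monomial_map D @: torus F n = monomial_map D' @: torus F n.
  by apply/eqP; rewrite eqEsubset !monomial_image_sub ?eqD.
have im_gt0 : (0 < #|monomial_map D' @: torus F n|)%N.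
  rewrite card_gt0; apply/set0Pn; exists (monomial_map D' (1, [ffun=> 1])).
  apply: imset_f; rewrite inE oner_neq0.
  by apply/forallP => i; rewrite ffunE oner_neq0.
have := Nstar_card_image a D; rewrite im_eq -Nstar_card_image => /eqP.
by rewrite eqn_pmul2r // eqn_pmul2l ?card_finField_pred_gt0 // => /eqP.
Qed.
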